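(* Let $p,q>1$ be real numbers with $\frac1p+\frac1q=1$, let $n\ge1$ and let $a_1,\dots,a_n,b_1,\dots,b_n>0$. Put $S_a=\sum_{j=1}^n a_j^p$, $S_b=\sum_{j=1}^n b_j^q$, $$A=\frac{1}{2pq}S_a^{1/p}S_b^{1/q}\sum_{i=1}^n \left(\frac{a_i^p}{S_a}-\frac{b_i^q}{S_b}\right)^2,$$ $$m=\min_{1\le i\le n}\min\left\{\frac{a_i^p}{S_a},\ \frac{b_i^q}{S_b}\right\},\qquad M=\max_{1\le i\le n}\max\left\{\frac{a_i^p}{S_a},\ \frac{b_i^q}{S_b}\right\}.$$ Then $$\frac{A}{M}\leq S_a^{1/p}S_b^{1/q}-\sum_{i=1}^n a_ib_i\leq\frac{A}{m}.$$ *)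

From Stdlib Require Import Reals List.
Open Scope R_scope.

(* sumR n f = f 1 + ... + f n  (indices 1..n, as in the paper) *)
Fixpoint sumR (n : nat) (f : nat -> R) : R :=
  match n with
  | O => 0
  | S k => sumR k f + f (S k)
  end.

(* minimum / maximum of f 1, ..., f n (meaningful for n >= 1) *)
Definition minR (n : nat) (f : nat -> R) : R :=
  fold_right Rmin (f 1%nat) (map f (seq 1 n)).
Definition maxR (n : nat) (f : nat -> R) : R :=
  fold_right Rmax (f 1%nat) (map f (seq 1 n)).

(* Normalising [x_i = a_i^p / S_a] and [y_i = b_i^q / S_b] (both summing to 1) turns the
   Hölder defect into [S_a^(1/p) S_b^(1/q)] times the sum of the weighted AM-GM gaps
   [x_i / p + y_i / q - x_i^(1/p) y_i^(1/q)].  Each gap lies between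
   [(x_i - y_i)^2 / (2 p q max)] and [(x_i - y_i)^2 / (2 p q min)]: by homogeneity this
   reduces to [t |-> l t + (1 - l) - t^l - l (1 - l) (t - 1)^2 / 2] being nonincreasing
   on [(0, +oo)], whose derivative is nonpositive by the tangent-line bound for the
   convex function [t^(l-1)]. *)

From Stdlib Require Import Reals Lra Lia List.
Open Scope R_scope.

Lemma Rpower_pos x y : 0 < Rpower x y.
Proof. apply exp_pos. Qed.

Lemma Rpower_1_l y : Rpower 1 y = 1.
Proof. unfold Rpower; rewrite ln_1, Rmult_0_r; apply exp_0. Qed.

Lemma Rpower_ge_tangent t r : 0 < t -> r <= 0 -> 1 + r * (t - 1) <= Rpower t r.
Proof.
  intros Ht Hr; unfold Rpower.
  assert (Hln : ln t <= t - 1).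
  { pose proof (exp_ineq1_le (ln t)) as H; rewrite exp_ln in H; lra. }
  pose proof (exp_ineq1_le (r * ln t)); nra.
Qed.

Lemma Rpower_root_div c r S : 0 < c -> 0 < r -> 0 < S ->
  Rpower S (1 / r) * Rpower (Rpower c r / S) (1 / r) = c.
Proof.
  intros Hc Hr HS.
  rewrite Rpower_mult_distr by (try apply Rdiv_lt_0_compat; auto using Rpower_pos).
  replace (S * (Rpower c r / S)) with (Rpower c r) by (field; lra).
  rewrite Rpower_mult; replace (r * (1 / r)) with 1 by (field; lra).
  now apply Rpower_1.
Qed.

Definition wgap (l x y : R) : R :=
  l * x + (1 - l) * y - Rpower x l * Rpower y (1 - l).

Lemma wgap_sym l x y : wgap l x y = wgap (1 - l) y x.
Proof. unfold wgap; replace (1 - (1 - l)) with l by ring; ring. Qed.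

Lemma wgap_homog l x y : 0 < x -> 0 < y -> wgap l x y = y * wgap l (x / y) 1.
Proof.
  intros Hx Hy; unfold wgap; rewrite Rpower_1_l.
  assert (Hpow : y * Rpower (x / y) l = Rpower x l * Rpower y (1 - l)).
  { unfold Rpower, Rdiv.
    rewrite ln_mult, ln_Rinv by (auto; apply Rinv_0_lt_compat; auto).
    rewrite <- (exp_ln y) at 1 by auto; rewrite <- !exp_plus; f_equal; ring. }
  rewrite <- Hpow; field; lra.
Qed.

Lemma Rdiv_mult_le_contravar c u v N : 0 <= c -> 0 < u -> u <= v -> 0 <= N ->
  c / (2 * v) * N <= c / (2 * u) * N.
Proof.
  intros Hc Hu Huv HN; apply Rmult_le_compat_r; auto; unfold Rdiv.
  apply Rmult_le_compat_l; auto; apply Rinv_le_contravar; lra.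
Qed.

Section WgapAtOne.

Variable l : R.
Hypothesis hl : 0 < l < 1.

Let wgap1_sub_sq t := l * t + (1 - l) - Rpower t l - l * (1 - l) / 2 * (t - 1) ^ 2.

Lemma wgap1_sub_sq_derive t : 0 < t ->
  derivable_pt_lim wgap1_sub_sq t (l - l * Rpower t (l - 1) - l * (1 - l) * (t - 1)).
Proof.
  intros Ht.
  assert (Hlin : derivable_pt_lim (fun t => l * t + (1 - l)) t l).
  { pose proof (derivable_pt_lim_plus _ _ t _ _
      (derivable_pt_lim_scal id l t 1 (derivable_pt_lim_id t))
      (derivable_pt_lim_const (1 - l) t)) as H.
    unfold plus_fct, mult_real_fct, id in H; now rewrite Rmult_1_r, Rplus_0_r in H. }
  assert (Hsq : derivable_pt_lim (fun t => l * (1 - l) / 2 * (t - 1) ^ 2) t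
                  (l * (1 - l) * (t - 1))).
  { pose proof (derivable_pt_lim_scal _ (l * (1 - l) / 2) t _
      (derivable_pt_lim_comp (fun t => t - 1) (fun u => u ^ 2) t (1 - 0) _
         (derivable_pt_lim_minus _ _ t 1 0 (derivable_pt_lim_id t)
            (derivable_pt_lim_const 1 t))
         (derivable_pt_lim_pow (t - 1) 2))) as H.
    unfold mult_real_fct, comp in H.
    replace (l * (1 - l) * (t - 1)) with
      (l * (1 - l) / 2 * (INR 2 * (t - 1) ^ Nat.pred 2 * (1 - 0))) by (simpl; field).
    exact H. }
  exact (derivable_pt_lim_minus _ _ t _ _
    (derivable_pt_lim_minus _ _ t _ _ Hlin (derivable_pt_lim_power t l Ht)) Hsq).
Qed.

Lemma wgap1_sub_sq_antitone s t : 0 < s -> s <= t -> wgap1_sub_sq t <= wgap1_sub_sq s.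
Proof.
  intros Hs Hst; destruct (Req_dec s t) as [<-|Hne]; [lra|].
  destruct (MVT_cor2 wgap1_sub_sq _ s t ltac:(lra) (fun c Hc => wgap1_sub_sq_derive c ltac:(lra)))
    as [c [Hmvt Hc]].
  pose proof (Rpower_ge_tangent c (l - 1) ltac:(lra) ltac:(lra)).
  assert (Hd : l - l * Rpower c (l - 1) - l * (1 - l) * (c - 1) <= 0) by nra.
  nra.
Qed.

Lemma wgap1_eq t : wgap l t 1 = l * t + (1 - l) - Rpower t l.
Proof. unfold wgap; rewrite Rpower_1_l; ring. Qed.

Lemma wgap1_le_sq t : 1 <= t -> wgap l t 1 <= l * (1 - l) / 2 * (t - 1) ^ 2.
Proof.
  intros Ht; pose proof (wgap1_sub_sq_antitone 1 t ltac:(lra) Ht).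
  unfold wgap1_sub_sq in *; rewrite wgap1_eq, Rpower_1_l in *; lra.
Qed.

Lemma sq_le_wgap1 t : 0 < t <= 1 -> l * (1 - l) / 2 * (t - 1) ^ 2 <= wgap l t 1.
Proof.
  intros Ht; pose proof (wgap1_sub_sq_antitone t 1 ltac:(lra) ltac:(lra)).
  unfold wgap1_sub_sq in *; rewrite wgap1_eq, Rpower_1_l in *; lra.
Qed.

End WgapAtOne.

Lemma wgap_le_sq l x y : 0 < l < 1 -> 0 < y <= x ->
  wgap l x y <= l * (1 - l) / (2 * y) * (x - y) ^ 2.
Proof.
  intros Hl Hy; rewrite wgap_homog by lra.
  assert (Hxy : 1 <= x / y) by (assert (x = x / y * y) by (field; lra); nra).
  pose proof (Rmult_le_compat_l y _ _ ltac:(lra) (wgap1_le_sq l Hl _ Hxy)) as H.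
  replace (l * (1 - l) / (2 * y) * (x - y) ^ 2)
    with (y * (l * (1 - l) / 2 * (x / y - 1) ^ 2)) by (field; lra).
  exact H.
Qed.

Lemma sq_le_wgap l x y : 0 < l < 1 -> 0 < x <= y ->
  l * (1 - l) / (2 * y) * (x - y) ^ 2 <= wgap l x y.
Proof.
  intros Hl Hx; rewrite wgap_homog by lra.
  assert (Hxy : 0 < x / y <= 1) by (assert (x = x / y * y) by (field; lra); nra).
  pose proof (Rmult_le_compat_l y _ _ ltac:(lra) (sq_le_wgap1 l Hl _ Hxy)) as H.
  replace (l * (1 - l) / (2 * y) * (x - y) ^ 2)
    with (y * (l * (1 - l) / 2 * (x / y - 1) ^ 2)) by (field; lra).
  exact H.
Qed.

Lemma wgap_bounds l x y m M : 0 < l < 1 -> 0 < m ->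
  m <= x <= M -> m <= y <= M ->
  l * (1 - l) / (2 * M) * (x - y) ^ 2 <= wgap l x y
  /\ wgap l x y <= l * (1 - l) / (2 * m) * (x - y) ^ 2.
Proof.
  assert (ordered : forall l' x' y', 0 < l' < 1 -> 0 < m -> m <= y' -> y' <= x' -> x' <= M ->
    l' * (1 - l') / (2 * M) * (x' - y') ^ 2 <= wgap l' x' y'
    /\ wgap l' x' y' <= l' * (1 - l') / (2 * m) * (x' - y') ^ 2).
  { intros l' x' y' Hl Hm Hy Hyx Hx.
    assert (Hsq : 0 <= (x' - y') ^ 2) by apply pow2_ge_0.
    assert (Hc : 0 <= l' * (1 - l')) by nra.
    split.
    - rewrite wgap_sym.
      pose proof (sq_le_wgap (1 - l') y' x' ltac:(lra) ltac:(lra)) as H.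
      replace ((1 - l') * (1 - (1 - l'))) with (l' * (1 - l')) in H by ring.
      replace ((y' - x') ^ 2) with ((x' - y') ^ 2) in H by ring.
      eapply Rle_trans; [| exact H]; apply Rdiv_mult_le_contravar; lra.
    - eapply Rle_trans; [apply wgap_le_sq; lra | apply Rdiv_mult_le_contravar; lra]. }
  intros Hl Hm Hx Hy; destruct (Rle_dec y x) as [Hyx | Hxy]; [apply ordered; lra |].
  rewrite wgap_sym; replace (l * (1 - l)) with ((1 - l) * (1 - (1 - l))) by ring.
  replace ((x - y) ^ 2) with ((y - x) ^ 2) by ring.
  apply ordered; lra.
Qed.

Lemma sumR_ext n f g : (forall i, (1 <= i <= n)%nat -> f i = g i) -> sumR n f = sumR n g.
Proof.
  induction n as [|n IH]; intros H; simpl; auto.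
  rewrite IH, H by (lia || (intros; apply H; lia)); reflexivity.
Qed.

Lemma sumR_le n f g : (forall i, (1 <= i <= n)%nat -> f i <= g i) -> sumR n f <= sumR n g.
Proof.
  induction n as [|n IH]; intros H; simpl; [lra |].
  pose proof (IH ltac:(intros; apply H; lia)); pose proof (H (S n) ltac:(lia)); lra.
Qed.

Lemma sumR_pos n f : (1 <= n)%nat -> (forall i, (1 <= i <= n)%nat -> 0 < f i) ->
  0 < sumR n f.
Proof.
  induction n as [|n IH]; intros Hn H; [lia |]; simpl.
  pose proof (H (S n) ltac:(lia)).
  destruct n as [|n]; [simpl; lra |].
  pose proof (IH ltac:(lia) ltac:(intros; apply H; lia)); lra.
Qed.

Lemma sumR_scal n c f : sumR n (fun i => c * f i) = c * sumR n f.
Proof. induction n as [|n IH]; simpl; [ring |]; rewrite IH; ring. Qed.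

Lemma sumR_div n c f : sumR n (fun i => f i / c) = sumR n f / c.
Proof. induction n as [|n IH]; simpl; unfold Rdiv in *; [ring |]; rewrite IH; ring. Qed.

Lemma sumR_wgap n l x y :
  sumR n (fun i => wgap l (x i) (y i))
  = l * sumR n x + (1 - l) * sumR n y - sumR n (fun i => Rpower (x i) l * Rpower (y i) (1 - l)).
Proof. induction n as [|n IH]; simpl; [ring |]; rewrite IH; unfold wgap; ring. Qed.

Lemma sumR_wgap_bounds n l x y m M : 0 < l < 1 -> 0 < m ->
  (forall i, (1 <= i <= n)%nat -> m <= x i <= M /\ m <= y i <= M) ->
  l * (1 - l) / (2 * M) * sumR n (fun i => (x i - y i) ^ 2)
    <= sumR n (fun i => wgap l (x i) (y i))
  /\ sumR n (fun i => wgap l (x i) (y i))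
    <= l * (1 - l) / (2 * m) * sumR n (fun i => (x i - y i) ^ 2).
Proof.
  intros Hl Hm Hxy; rewrite <- !sumR_scal; split; apply sumR_le;
    intros i Hi; destruct (Hxy i Hi) as [Hx Hy];
    pose proof (wgap_bounds l (x i) (y i) m M Hl Hm Hx Hy); tauto.
Qed.

Lemma fold_Rmin_le d l z : In z (d :: l) -> fold_right Rmin d l <= z.
Proof.
  induction l as [|c l IH]; simpl; intros Hz; [destruct Hz as [<- | []]; lra |].
  destruct Hz as [<- | [<- | Hz]].
  - eapply Rle_trans; [apply Rmin_r | apply IH; left; auto].
  - apply Rmin_l.
  - eapply Rle_trans; [apply Rmin_r | apply IH; right; auto].
Qed.

Lemma fold_Rmax_ge d l z : In z (d :: l) -> z <= fold_right Rmax d l.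
Proof.
  induction l as [|c l IH]; simpl; intros Hz; [destruct Hz as [<- | []]; lra |].
  destruct Hz as [<- | [<- | Hz]].
  - eapply Rle_trans; [apply IH; left; auto | apply Rmax_r].
  - apply Rmax_l.
  - eapply Rle_trans; [apply IH; right; auto | apply Rmax_r].
Qed.

Lemma in_seq_image n (f : nat -> R) i : (1 <= i <= n)%nat ->
  In (f i) (f 1%nat :: map f (seq 1 n)).
Proof. intros Hi; right; apply in_map, in_seq; lia. Qed.

Lemma minR_le n f i : (1 <= i <= n)%nat -> minR n f <= f i.
Proof. intros Hi; apply fold_Rmin_le, in_seq_image, Hi. Qed.

Lemma maxR_ge n f i : (1 <= i <= n)%nat -> f i <= maxR n f.
Proof. intros Hi; apply fold_Rmax_ge, in_seq_image, Hi. Qed.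

Lemma minR_pos n f : (forall i, (1 <= i <= n)%nat -> 0 < f i) -> (1 <= n)%nat ->
  0 < minR n f.
Proof.
  intros H Hn; unfold minR.
  assert (Hall : forall z, In z (map f (seq 1 n)) -> 0 < z).
  { intros z Hz; apply in_map_iff in Hz as [i [<- Hi]]; apply in_seq in Hi; apply H; lia. }
  induction (map f (seq 1 n)) as [|c l IH]; simpl; [apply H; lia |].
  apply Rmin_glb_lt; [apply Hall; left | apply IH; intros; apply Hall; right]; auto.
Qed.

Lemma min_max_envelope n f g i : (1 <= i <= n)%nat ->
  minR n (fun j => Rmin (f j) (g j)) <= f i <= maxR n (fun j => Rmax (f j) (g j))
  /\ minR n (fun j => Rmin (f j) (g j)) <= g i <= maxR n (fun j => Rmax (f j) (g j)).
Proof.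
  intros Hi.
  pose proof (minR_le n (fun j => Rmin (f j) (g j)) i Hi).
  pose proof (maxR_ge n (fun j => Rmax (f j) (g j)) i Hi).
  pose proof (Rmin_l (f i) (g i)); pose proof (Rmin_r (f i) (g i)).
  pose proof (Rmax_l (f i) (g i)); pose proof (Rmax_r (f i) (g i)).
  lra.
Qed.

Lemma holder_defect_eq p q n a b : 0 < p -> 0 < q -> 1 / p + 1 / q = 1 -> (1 <= n)%nat ->
  (forall i, (1 <= i <= n)%nat -> 0 < a i) ->
  (forall i, (1 <= i <= n)%nat -> 0 < b i) ->
  let Sa := sumR n (fun j => Rpower (a j) p) in
  let Sb := sumR n (fun j => Rpower (b j) q) in
  Rpower Sa (1 / p) * Rpower Sb (1 / q) - sumR n (fun i => a i * b i)
  = Rpower Sa (1 / p) * Rpower Sb (1 / q)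
    * sumR n (fun i => wgap (1 / p) (Rpower (a i) p / Sa) (Rpower (b i) q / Sb)).
Proof.
  intros Hp Hq Hpq Hn Ha Hb Sa Sb.
  assert (HSa : 0 < Sa) by (apply sumR_pos; auto using Rpower_pos).
  assert (HSb : 0 < Sb) by (apply sumR_pos; auto using Rpower_pos).
  rewrite sumR_wgap, !sumR_div; fold Sa Sb.
  replace (1 - 1 / p) with (1 / q) by lra.
  replace (Sa / Sa) with 1 by (field; lra); replace (Sb / Sb) with 1 by (field; lra).
  rewrite (sumR_ext n (fun i => a i * b i)
    (fun i => Rpower Sa (1 / p) * Rpower Sb (1 / q)
              * (Rpower (Rpower (a i) p / Sa) (1 / p) * Rpower (Rpower (b i) q / Sb) (1 / q)))).
  - rewrite sumR_scal, !Rmult_1_r, Hpq; ring.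
  - intros i Hi.
    rewrite <- (Rpower_root_div (a i) p Sa) at 1 by auto.
    rewrite <- (Rpower_root_div (b i) q Sb) at 1 by auto.
    ring.
Qed.

Theorem mainTheorem3 (p q : R) (n : nat) (a b : nat -> R)
  (hp : 1 < p) (hq : 1 < q) (hpq : 1 / p + 1 / q = 1) (hn : (1 <= n)%nat)
  (ha : forall i, (1 <= i <= n)%nat -> 0 < a i)
  (hb : forall i, (1 <= i <= n)%nat -> 0 < b i) :
  let Sa := sumR n (fun j => Rpower (a j) p) in
  let Sb := sumR n (fun j => Rpower (b j) q) in
  let A := / (2 * p * q) * Rpower Sa (1 / p) * Rpower Sb (1 / q) *
           sumR n (fun i => (Rpower (a i) p / Sa - Rpower (b i) q / Sb) ^ 2) in
  let m := minR n (fun i => Rmin (Rpower (a i) p / Sa) (Rpower (b i) q / Sb)) in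
  let M := maxR n (fun i => Rmax (Rpower (a i) p / Sa) (Rpower (b i) q / Sb)) in
  A / M <= Rpower Sa (1 / p) * Rpower Sb (1 / q) - sumR n (fun i => a i * b i)
  /\ Rpower Sa (1 / p) * Rpower Sb (1 / q) - sumR n (fun i => a i * b i) <= A / m.
Proof.
  intros Sa Sb A m M.
  assert (HSa : 0 < Sa) by (apply sumR_pos; auto using Rpower_pos).
  assert (HSb : 0 < Sb) by (apply sumR_pos; auto using Rpower_pos).
  set (K := Rpower Sa (1 / p) * Rpower Sb (1 / q)) in *.
  assert (HK : 0 < K) by (apply Rmult_lt_0_compat; apply Rpower_pos).
  assert (Henv : forall i, (1 <= i <= n)%nat ->
    m <= Rpower (a i) p / Sa <= M /\ m <= Rpower (b i) q / Sb <= M)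
    by exact (min_max_envelope n (fun i => Rpower (a i) p / Sa) (fun i => Rpower (b i) q / Sb)).
  assert (Hm : 0 < m).
  { apply minR_pos; auto; intros i Hi.
    apply Rmin_glb_lt; apply Rdiv_lt_0_compat; auto using Rpower_pos. }
  assert (HM : 0 < M) by (destruct (Henv 1%nat ltac:(lia)); lra).
  assert (HA : forall N, 0 < N -> A / N = K * (1 / p * (1 - 1 / p) / (2 * N)
    * sumR n (fun i => (Rpower (a i) p / Sa - Rpower (b i) q / Sb) ^ 2))).
  { intros N HN; unfold A, K; replace (1 - 1 / p) with (1 / q) by lra.
    field; lra. }
  assert (Hdefect : K - sumR n (fun i => a i * b i)
    = K * sumR n (fun i => wgap (1 / p) (Rpower (a i) p / Sa) (Rpower (b i) q / Sb)))
    by exact (holder_defect_eq p q n a b ltac:(lra) ltac:(lra) hpq hn ha hb).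
  rewrite Hdefect, (HA M HM), (HA m Hm).
  destruct (sumR_wgap_bounds n (1 / p) (fun i => Rpower (a i) p / Sa)
    (fun i => Rpower (b i) q / Sb) m M) as [Hlow Hup]; auto.
  - assert (0 < 1 / q) by (apply Rdiv_lt_0_compat; lra).
    split; [apply Rdiv_lt_0_compat |]; lra.
  - split; apply Rmult_le_compat_l; lra.
Qed.
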